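(* Let $n \ge 1$ and let $k,\ell \ge 0$ be integers with $k+\ell \le n$. The number of rooted trees on the vertex set $[n+1]=\{1,\ldots,n+1\}$ in which the root has exactly $k$ children that are smaller than the root and exactly $\ell$ children that are larger than the root equals $$\binom{n+1}{k+\ell+1}\,(k+\ell)\,n^{\,n-k-\ell-1}.$$
   Context: A rooted tree on a vertex set $V$ is a tree with vertex set $V$ together with a distinguished vertex (the root); the children of the root are the vertices adjacent to it. Vertices are compared by their integer labels. *)

From HB Require Import structures.
From mathcomp Require Import all_boot all_order all_algebra.
Set Implicit Arguments. Unset Strict Implicit. Unset Printing Implicit Defensive.
Import Order.TTheory GRing.Theory Num.Theory.

(* Vertices are 'I_N, labels 0..N-1, an order-preserving relabelling of [N]. *)
Definition adj (N : nat) (E : {set {set 'I_N}}) : rel 'I_N :=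
  fun x y => [set x; y] \in E.

Definition is_tree (N : nat) (E : {set {set 'I_N}}) : bool :=
  [forall e in E, #|e| == 2] &&
  (#|E| == N.-1) &&
  [forall x, forall y, connect (adj E) x y].

(* children of root r in the tree E = neighbours of r *)
Definition small_children (N : nat) (E : {set {set 'I_N}}) (r : 'I_N) : {set 'I_N} :=
  [set c | adj E r c & c < r].
Definition large_children (N : nat) (E : {set {set 'I_N}}) (r : 'I_N) : {set 'I_N} :=
  [set c | adj E r c & r < c].

Definition num_rooted_trees (N k l : nat) : nat :=
  #|[set p : {set {set 'I_N}} * 'I_N |
      is_tree p.1 && (#|small_children p.1 p.2| == k)
                  && (#|large_children p.1 p.2| == l)]|.

From mathcomp Require Import all_boot all_order all_algebra.
From mathcomp Require Import ring zify.
Import Order.TTheory GRing.Theory Num.Theory.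
Set Implicit Arguments. Unset Strict Implicit. Unset Printing Implicit Defensive.

(* A tree rooted at r is the same as a parent map f (fixing r, with no cycle
   avoiding r), and the children of the root form its first layer
   S = f^-1(r) minus r.  Once S is fixed, the rest of the tree is a forest on
   the n - |S| remaining vertices with root set S; by the Cayley-Abel formula
   there are |S| n^(n-|S|-1) of them, which we prove by induction, peeling off
   the first layer of the forest and summing with the binomial theorem.
   With vertex labels 0..n, a root r has C(r, k) C(n-r, l) admissible child
   sets, and summing over r gives C(n+1, k+l+1). *)

Section FiniteSets.
Variable T : finType.
Implicit Types A B S : {set T}.

Lemma set2_eq (a b c d : T) :
  [set a; b] = [set c; d] -> (a = c /\ b = d) \/ (a = d /\ b = c).
Proof.
move=> abcd; have ab x : x \in [set a; b] -> x \in [set c; d] by rewrite abcd.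
have cd x : x \in [set c; d] -> x \in [set a; b] by rewrite abcd.
move: (ab a (set21 _ _)) (ab b (set22 _ _)) (cd c (set21 _ _)) (cd d (set22 _ _)).
rewrite !inE => /pred2P [] ? /pred2P [] ? /pred2P [] ? /pred2P [] ?;
  first [by left; split; congruence | by right; split; congruence].
Qed.

Lemma card_split A B S : [disjoint A & B] -> S \subset A :|: B ->
  #|S| = #|S :&: A| + #|S :&: B|.
Proof.
move=> dAB sS; rewrite -cardsUI -setIUr (setIidPl sS) setIACA setIid.
by rewrite (disjoint_setI0 dAB) setI0 cards0 addn0.
Qed.

Lemma card_split_subsets A B k l : [disjoint A & B] ->
  #|[set S : {set T} | [&& S \subset A :|: B, #|S :&: A| == k & #|S :&: B| == l]]| =
  'C(#|A|, k) * 'C(#|B|, l).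
Proof.
move=> dAB; rewrite -!cards_draws -cardsX.
have splitK S : S \subset A :|: B -> (S :&: A) :|: (S :&: B) = S.
  by move=> sS; rewrite -setIUr (setIidPl sS).
rewrite -(card_in_imset (f := fun S => (S :&: A, S :&: B))) => [|S1 S2].
  apply: eq_card => -[X Y]; rewrite !inE /=; apply/imsetP/andP.
    case=> S; rewrite inE => /and3P [_ /eqP <- /eqP <-] [-> ->].
    by rewrite !subsetIr !eqxx.
  case=> /andP [sXA /eqP cX] /andP [sYB /eqP cY].
  have XYA : (X :|: Y) :&: A = X.
    by rewrite setIUl (setIidPl sXA) setIC (disjoint_setI0 (disjointWr sYB dAB)) setU0.
  have XYB : (X :|: Y) :&: B = Y.
    by rewrite setIUl (setIidPl sYB) (disjoint_setI0 (disjointWl sXA dAB)) set0U.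
  by exists (X :|: Y); rewrite ?inE ?setUSS // XYA XYB ?cX ?cY ?eqxx.
rewrite !inE => /and3P [sS1 _ _] /and3P [sS2 _ _] [SA SB].
by rewrite -(splitK _ sS1) SA SB splitK.
Qed.

Lemma sum_subsets_by_card B (w : nat -> nat) :
  \sum_(J : {set T} | J \subset B) w #|J| = \sum_(j < #|B|.+1) 'C(#|B|, j) * w j.
Proof.
rewrite (partition_big (fun J : {set T} => inord #|J| : 'I_#|B|.+1) xpredT) //.
apply: eq_bigr => j _; rewrite -cards_draws -sum_nat_const.
apply: eq_big => [J | J /andP [sJB /eqP <-]]; last first.
  by rewrite inordK // ltnS subset_leq_card.
rewrite !inE; case sJB: (J \subset B) => //=.
by rewrite -val_eqE /= inordK // ltnS subset_leq_card.
Qed.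
End FiniteSets.

Lemma card_ord_lt N m : m <= N -> #|[set i : 'I_N | i < m]| = m.
Proof.
move=> le_mN; have widen_inj : injective (widen_ord le_mN).
  by move=> i j /(congr1 val) /= /val_inj.
rewrite -[RHS]card_ord -(card_imset _ widen_inj); apply: eq_card => i; rewrite inE.
apply/idP/imsetP => [lt_im | [j _ ->]]; last exact: (ltn_ord j).
by exists (Ordinal lt_im) => //; apply: val_inj.
Qed.

Section ForestMaps.
Variable T : finType.
Implicit Types (R A J X : {set T}) (f h : {ffun T -> T}).

Definition acyclic_outside R (g : T -> T) :=
  [forall X : {set T}, (X \subset ~: R) && (g @: X \subset X) ==> (X == set0)].

(* [f \in forest_maps R A] encodes a forest on [~: R :|: A] rooted at [A]:
   [f] sends each vertex outside [R] to its parent and fixes [R] pointwise. *)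
Definition forest_maps R A : {set {ffun T -> T}} :=
  [set f : {ffun T -> T} | [&& [forall x in R, f x == x],
                               [forall x in ~: R, f x \in ~: R :|: A]
                             & acyclic_outside R f]].

Definition first_layer R (g : T -> T) := [set x in ~: R | g x \in R].

(* Cutting the edges from the first layer [J] down to [R] makes [J] the new root set. *)
Definition detach J f : {ffun T -> T} := [ffun x => if x \in J then x else f x].

Lemma acyclic_outsideP R (g : T -> T) :
  reflect (forall X, X \subset ~: R -> {in X, forall x, g x \in X} -> X = set0)
          (acyclic_outside R g).
Proof.
apply: (iffP forallP) => [acyc X sXR gX | acyc X].
  apply/eqP; move/implyP: (acyc X); apply; rewrite sXR /=.
  by apply/subsetP => _ /imsetP [x xX ->]; apply: gX.
apply/implyP => /andP [sXR /subsetP gX]; apply/eqP/acyc => // x xX.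
exact/gX/imset_f.
Qed.

Lemma forest_mapsP R A f :
  reflect [/\ {in R, forall x, f x = x}, {in ~: R, forall x, f x \in ~: R :|: A}
            & acyclic_outside R f]
          (f \in forest_maps R A).
Proof.
rewrite inE; apply: (iffP and3P) => [[/forall_inP fR /forall_inP fRc acyc] | [fR fRc acyc]].
  by split=> // x /fR /eqP.
by split=> //; apply/forall_inP => // x xR; rewrite fR.
Qed.

Lemma potential_acyclic_outside R (g : T -> T) (d : T -> nat) :
  {in ~: R, forall x, d (g x) < d x} -> acyclic_outside R g.
Proof.
move=> d_dec; apply/acyclic_outsideP => X sXR gX; apply/eqP.
apply: contraT => /set0Pn [x0 x0X]; case: (arg_minnP d x0X) => x xX x_min.
by have := x_min _ (gX x xX); rewrite leqNgt d_dec // (subsetP sXR).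
Qed.

Lemma detach_forest_map R A J f : J \subset ~: R ->
  f \in forest_maps R A -> first_layer R f = J -> detach J f \in forest_maps (R :|: J) J.
Proof.
move=> sJ /forest_mapsP [fR _ acyc] layerJ; apply/forest_mapsP; split.
- move=> x; rewrite inE ffunE => /orP [xR|->] //.
  suff /negPf -> : x \notin J by rewrite fR.
  by apply: contraL xR => /(subsetP sJ); rewrite inE.
- move=> x; rewrite !inE negb_or ffunE => /andP [xR /negPf xJ]; rewrite xJ.
  have fxR : f x \notin R by apply: contraFN xJ => fxR; rewrite -layerJ !inE xR fxR.
  by rewrite (negPf fxR) orNb.
- apply/acyclic_outsideP => X sX dX; move/acyclic_outsideP: acyc; apply.
    by apply: subset_trans sX _; rewrite setCU subsetIl.
  move=> x xX; have := dX x xX; rewrite ffunE.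
  suff /negPf -> : x \notin J by [].
  by move/(subsetP sX): xX; rewrite !inE negb_or => /andP [].
Qed.

Lemma detach_fiberE R A J h f : A \subset R -> J \subset ~: R ->
  h \in forest_maps (R :|: J) J ->
  [&& f \in forest_maps R A, first_layer R f == J & detach J f == h] =
  (f \in family (fun x => [pred y | if x \in J then y \in A else y == h x])).
Proof.
move=> sAR sJ /forest_mapsP [hRJ hRJc hacyc].
have JnR x : x \in J -> x \notin R by move/(subsetP sJ); rewrite inE.
have hnR x : x \notin R -> x \notin J -> h x \notin R.
  move=> xR xJ; have := hRJc x; rewrite !inE !negb_or xR xJ => /(_ isT).
  by case/orP => [/andP [] | /JnR].
apply/and3P/familyP => [[/forest_mapsP [_ fRc _] /eqP layerJ /eqP <-] x | fam].
  rewrite inE ffunE; case xJ: (x \in J) => //.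
  have := xJ; rewrite -layerJ inE => /andP [_ fxR].
  by have := fRc x (subsetP sJ x xJ); rewrite !inE fxR.
have fJ x : x \in J -> f x \in A by move=> xJ; have := fam x; rewrite inE xJ.
have fnJ x : x \notin J -> f x = h x.
  by move/negPf => xJ; have := fam x; rewrite inE xJ => /eqP.
have fR x : x \in R -> f x = x.
  move=> xR; have xJ : x \notin J by apply: contraL xR; apply: JnR.
  by rewrite fnJ // hRJ // inE xR.
split.
- apply/forest_mapsP; split=> // [x xR|].
    have [xJ | xJ] := boolP (x \in J); first by rewrite inE fJ ?orbT.
    by rewrite !inE fnJ // hnR // -in_setC.
  apply/acyclic_outsideP => X sX fX.
  have XnJ x : x \in X -> x \notin J.
    move=> xX; apply/negP => xJ.
    by have := subsetP sX _ (fX x xX); rewrite inE (subsetP sAR) ?fJ.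
  move/acyclic_outsideP: hacyc; apply.
  - by apply/subsetP => x xX; rewrite setCU inE (subsetP sX) // in_setC XnJ.
  - by move=> x xX; rewrite -(fnJ x (XnJ x xX)) fX.
- apply/eqP/setP => x; rewrite !inE.
  have [xJ | xJ] := boolP (x \in J); first by rewrite (JnR x xJ) (subsetP sAR) ?fJ.
  by have [xR | xR] := boolP (x \in R); rewrite // fnJ // (negPf (hnR x xR xJ)).
- apply/eqP/ffunP => x; rewrite ffunE.
  have [xJ | xJ] := boolP (x \in J); first by rewrite hRJ // inE xJ orbT.
  by rewrite fnJ.
Qed.

Lemma card_first_layer_fiber R A J : A \subset R -> J \subset ~: R ->
  #|[set f in forest_maps R A | first_layer R f == J]| =
  #|A| ^ #|J| * #|forest_maps (R :|: J) J|.
Proof.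
move=> sAR sJ; rewrite -sum1_card.
rewrite (partition_big (detach J) (mem (forest_maps (R :|: J) J))) => [|f]; last first.
  by rewrite inE => /andP [fF /eqP layerJ]; apply: detach_forest_map sJ fF layerJ.
rewrite mulnC -sum_nat_const; apply: eq_bigr => h hF.
pose F x := [pred y | if x \in J then y \in A else y == h x].
rewrite sum1dep_card -(@eq_card _ (family F)) => [|f]; last first.
  by rewrite -(detach_fiberE f sAR sJ hF) !inE andbA.
rewrite card_family foldrE big_map big_enum -prod_nat_const [LHS]big_mkcond [RHS]big_mkcond.
apply: eq_bigr => x _; rewrite /F /=; case: (x \in J); first exact: eq_card.
by rewrite -(card1 (h x)); apply: eq_card.
Qed.

Lemma forest_maps_setT A : forest_maps [set: T] A = [set [ffun x => x]].
Proof.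
apply/setP => f; rewrite in_set1; apply/forest_mapsP/eqP => [[fT _ _] | ->].
  by apply/ffunP => x; rewrite ffunE fT ?inE.
split=> [x _ | x | ]; rewrite ?ffunE ?setCT ?inE //.
by apply/acyclic_outsideP => X; rewrite setCT subset0 => /eqP.
Qed.

Lemma forest_maps_set0 R : ~: R != set0 -> forest_maps R set0 = set0.
Proof.
move=> R_proper; apply/setP => f; rewrite in_set0; apply/negP.
case/forest_mapsP => _ fRc /acyclic_outsideP /(_ _ (subxx _)) acyc.
by move/eqP: R_proper; apply; apply: acyc => x /fRc; rewrite setU0.
Qed.

Lemma card_forest_maps_by_layer R A (P : pred {set T}) :
  #|[set f in forest_maps R A | P (first_layer R f)]| =
  \sum_(J : {set T} | (J \subset ~: R) && P J)
    #|[set f in forest_maps R A | first_layer R f == J]|.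
Proof.
rewrite -sum1_card (partition_big (fun f : {ffun T -> T} => first_layer R f)
  (fun J => (J \subset ~: R) && P J)) => [|f]; last first.
  by rewrite inE => /andP [_ ->]; rewrite andbT; apply/subsetP => x; rewrite inE => /andP [].
apply: eq_bigr => J /andP [_ PJ]; rewrite sum1dep_card; apply: eq_card => f; rewrite !inE.
by case: eqP => [-> | _]; rewrite ?PJ ?andbT ?andbF.
Qed.

Fixpoint reach_within (e : rel T) r n x :=
  if n is m.+1 then (x == r) || [exists y, e x y && reach_within e r m y] else x == r.

Lemma path_reach_within (e : rel T) r x p :
  path e x p -> last x p = r -> reach_within e r (size p) x.
Proof.
elim: p x => [|y p IHp] x /=; first by move=> _ ->.
by case/andP => exy py ly; apply/orP; right; apply/existsP; exists y; rewrite exy IHp.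
Qed.

Lemma connect_parent_map (e : rel T) r : (forall x, connect e x r) ->
  exists2 f, f \in forest_maps [set r] [set r] & {in ~: [set r], forall x, e x (f x)}.
Proof.
(* Point each vertex to a neighbour closer to [r]; the distance to [r] is then
   a decreasing potential. *)
move=> conn; have reach x : exists n, reach_within e r n x.
  by case/connectP: (conn x) => p ep ->; exists (size p); apply: path_reach_within.
pose dist x := ex_minn (reach x).
have step x : x != r -> exists y, e x y && (dist y < dist x).
  rewrite /dist; case: ex_minnP => [[|m]] /=; first by move/eqP ->; rewrite eqxx.
  move=> reach_m min_m /negPf xr; move: reach_m; rewrite xr => /existsP [y /andP [exy reach_y]].
  by exists y; rewrite exy ltnS; case: ex_minnP => n _; apply.
pose f := [ffun x => if x == r then r else odflt r [pick y | e x y && (dist y < dist x)]].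
have f_step x : x != r -> e x (f x) && (dist (f x) < dist x).
  move=> xr; rewrite ffunE (negPf xr); case: pickP => [y //|none].
  by case: (step x xr) => y; rewrite none.
have xr x : x \in ~: [set r] -> x != r by rewrite !inE.
exists f; last by move=> x /xr /f_step /andP [].
apply/forest_mapsP; split=> [x /set1P -> | x _ | ]; first by rewrite ffunE eqxx.
  by rewrite setUC setUCr inE.
by apply: (potential_acyclic_outside (d := dist)) => x /xr /f_step /andP [].
Qed.

End ForestMaps.

Lemma Vandermonde_upper n k l :
  \sum_(r < n.+1) 'C(r, k) * 'C(n - r, l) = 'C(n.+1, (k + l).+1).
Proof.
elim: n l => [|n IHn] l.
  by rewrite big_ord1; case: k => [|k]; case: l => [|l]; rewrite ?bin0n ?muln0 ?addnS.
rewrite big_ord_recr /= subnn; case: l => [|l].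
  rewrite bin0 muln1 (eq_bigr (fun i : 'I_n.+1 => 'C(i, k) * 'C(n - i, 0))) => [|i _].
    by rewrite IHn !addn0 binS.
  by rewrite !bin0.
rewrite bin0n muln0 addn0 addnS binS -(IHn l) -addnS -IHn -big_split.
apply: eq_bigr => i _.
by rewrite subSn ?binS ?mulnDr // -ltnS.
Qed.

(* Cayley-Abel count of the forests on [s] vertices hanging from [d] roots. *)
Definition forest_count s d := if s == 0 then 1 else d * (s + d) ^ s.-1.

Lemma forest_count_rec s d : 0 < s ->
  \sum_(j < s.+1) 'C(s, j) * (d ^ j * forest_count (s - j) j) = forest_count s d.
Proof.
case: s => // s _; rewrite big_ord_recl /forest_count /= muln0 add0n.
rewrite expnDn big_distrr; apply: eq_bigr => i _.
rewrite /bump /= add1n subSS.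
case: (ltngtP i s) => [lt_is | /(leq_trans (ltn_ord i)) | ->]; last 2 first.
- by rewrite ltnn.
- by rewrite subnn !binn /= expnS; ring.
have -> : (s - i == 0) = false by rewrite subn_eq0 leqNgt lt_is.
have -> : s - i + i.+1 = s.+1 by lia.
have -> : s - i = (s - i).-1.+1 by lia.
have := mul_bin_diag s.+1 i => /= bin_diag.
rewrite !expnS; transitivity (d * d ^ i * s.+1 ^ (s - i).-1 * (i.+1 * 'C(s.+1, i.+1))).
  by ring.
by rewrite -bin_diag; ring.
Qed.

Lemma card_forest_maps (T : finType) (R A : {set T}) :
  A \subset R -> #|forest_maps R A| = forest_count #|~: R| #|A|.
Proof.
move eq_s: #|~: R| => s; elim/ltn_ind: s R A eq_s => s IH R A cardR sAR.
have [s0 | s_gt0] := posnP s.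
  have RT : R = setT.
    by rewrite -[R]setCK -setC0; congr (~: _); apply/eqP; rewrite -cards_eq0 cardR s0.
  by rewrite RT forest_maps_setT cards1 s0.
have -> : forest_maps R A = [set f in forest_maps R A | xpredT (first_layer R f)].
  by apply/setP => f; rewrite !inE andbT.
(* The first layer [J] is attached to [A] in [#|A| ^ #|J|] ways, and the rest
   is a forest rooted at [J]. *)
rewrite (card_forest_maps_by_layer _ _ xpredT) -(forest_count_rec _ s_gt0) -cardR.
rewrite -(sum_subsets_by_card _ (fun j => #|A| ^ j * forest_count (#|~: R| - j) j)) cardR.
apply: eq_big => [J | J /andP [sJ _]]; first exact: andbT.
rewrite card_first_layer_fiber //; congr (_ * _).
have [-> | J_ne0] := eqVneq J set0.
  have R_proper : ~: R != set0 by rewrite -card_gt0 cardR.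
  by rewrite setU0 forest_maps_set0 // !cards0 subn0 /forest_count eqn0Ngt s_gt0.
have cardRJ : #|~: (R :|: J)| = s - #|J| by rewrite setCU -setDE cardsD (setIidPr sJ) cardR.
apply: (IH _ _ _ _ cardRJ (subsetUr _ _)).
by rewrite ltn_subrL card_gt0 J_ne0.
Qed.

Section ParentTrees.
Variable N : nat.
Implicit Types (f g : {ffun 'I_N -> 'I_N}) (r x c : 'I_N) (S : {set 'I_N}).
Implicit Types (E : {set {set 'I_N}}).

Definition parent_maps r := forest_maps [set r] [set r].

Definition parent_tree r f : {set {set 'I_N}} := [set [set x; f x] | x in ~: [set r]].

Lemma parent_maps_root r f : f \in parent_maps r -> f r = r.
Proof. by case/forest_mapsP => fr _ _; apply/fr/set11. Qed.

Lemma parent_maps_no_2cycle r f x : f \in parent_maps r -> x != r -> f (f x) != x.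
Proof.
move=> fP xr; apply/eqP => ffx; have fr := parent_maps_root fP.
have fxr : f x != r by apply: contraNneq xr => fx_r; rewrite -ffx fx_r fr.
case/forest_mapsP: fP => _ _ /acyclic_outsideP cycle_empty.
suff /setP/(_ x) : [set x; f x] = set0 by rewrite !inE eqxx.
apply: cycle_empty => [|y]; first by apply/subsetP => y; rewrite !inE => /pred2P [] ->.
by rewrite !inE => /pred2P [] ->; rewrite ?ffx eqxx ?orbT.
Qed.

Lemma parent_edge_inj r f :
  f \in parent_maps r -> {in ~: [set r] &, injective (fun x => [set x; f x])}.
Proof.
move=> fP x y xr _ /set2_eq [[] // | [x_fy fx_y]]; rewrite !inE in xr.
by have := parent_maps_no_2cycle fP xr; rewrite fx_y -x_fy eqxx.
Qed.

Lemma card_parent_tree r f : f \in parent_maps r -> #|parent_tree r f| = N.-1.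
Proof.
by move=> fP; rewrite card_in_imset ?cardsC1 ?card_ord //; apply: parent_edge_inj.
Qed.

Lemma adj_parent_tree_root r f c :
  f \in parent_maps r -> adj (parent_tree r f) r c = (c \in first_layer [set r] f).
Proof.
move=> fP; rewrite /adj !inE; apply/imsetP/andP => [[x xr] | [cr /eqP fc]].
  rewrite !inE in xr; case/set2_eq => [[rx _] | [r_fx ->]].
    by rewrite rx eqxx in xr.
  by rewrite -r_fx eqxx xr.
by exists c; rewrite ?inE // fc setUC.
Qed.

Lemma children_parent_tree r f (P : pred 'I_N) : f \in parent_maps r ->
  [set c | adj (parent_tree r f) r c & P c] = first_layer [set r] f :&: [set c | P c].
Proof. by move=> fP; apply/setP => c; rewrite inE adj_parent_tree_root // !inE. Qed.

Lemma parent_tree_connect_root r f x :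
  f \in parent_maps r -> connect (adj (parent_tree r f)) x r.
Proof.
case/forest_mapsP=> _ _ /acyclic_outsideP acyc.
suff /setP/(_ x) : [set y | ~~ connect (adj (parent_tree r f)) y r] = set0.
  by rewrite !inE => /negbFE.
apply: acyc => [|y]; first by apply/subsetP => y; rewrite !inE; apply: contra => /eqP ->.
rewrite !inE => y_nc; have yr : y != r by apply: contraNneq y_nc => ->; apply: connect0.
apply: contra y_nc => /(connect_trans _); apply; apply: connect1.
by apply/imsetP; exists y; rewrite ?inE.
Qed.

Lemma parent_tree_is_tree r f : f \in parent_maps r -> is_tree (parent_tree r f).
Proof.
move=> fP; rewrite /is_tree card_parent_tree // eqxx andbT; apply/andP; split.
  apply/forall_inP => _ /imsetP [x xr ->]; rewrite cards2; rewrite !inE in xr.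
  suff -> : x != f x by [].
  by apply: contraNneq (parent_maps_no_2cycle fP xr) => x_fx; rewrite -!x_fx eqxx.
have sym_adj : connect_sym (adj (parent_tree r f)).
  by apply: sym_connect_sym => x y; rewrite /adj setUC.
apply/forallP => x; apply/forallP => y; apply: connect_trans (parent_tree_connect_root x fP) _.
by rewrite sym_adj parent_tree_connect_root.
Qed.

Lemma parent_tree_inj r : {in parent_maps r &, injective (parent_tree r)}.
Proof.
move=> f g fP gP fg_tree; have fr := parent_maps_root fP; have gr := parent_maps_root gP.
suff /setP fg : [set x | f x != g x] = set0.
  by apply/ffunP => x; have := fg x; rewrite !inE => /negbFE/eqP.
case/forest_mapsP: (gP) => _ _ /acyclic_outsideP; apply.
  by apply/subsetP => x; rewrite !inE; apply: contra => /eqP ->; rewrite fr gr.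
move=> x; rewrite !inE => fg_x.
have xr : x != r by apply: contraNneq fg_x => ->; rewrite fr gr.
have : [set x; g x] \in parent_tree r g by apply/imsetP; exists x; rewrite ?inE.
rewrite -fg_tree => /imsetP [z _ /set2_eq [[xz gxz] | [xfz gxz]]].
  by rewrite gxz -xz eqxx in fg_x.
by rewrite gxz -xfz eq_sym -gxz; apply: parent_maps_no_2cycle gP xr.
Qed.

Lemma parent_tree_surj r E : is_tree E -> exists2 f, f \in parent_maps r & parent_tree r f = E.
Proof.
case/andP => /andP [_ /eqP cardE] /forallP conn.
have [f fP f_adj] := connect_parent_map (fun x => forallP (conn x) r).
exists f => //; apply/eqP; rewrite eqEcard card_parent_tree // cardE leqnn andbT.
by apply/subsetP => _ /imsetP [x xr ->]; apply: f_adj.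
Qed.

Lemma card_parent_maps_first_layer r S : S \subset ~: [set r] ->
  #|[set f in parent_maps r | first_layer [set r] f == S]| = forest_count (N.-1 - #|S|) #|S|.
Proof.
move=> sS; rewrite card_first_layer_fiber ?subxx // cards1 exp1n mul1n.
rewrite card_forest_maps ?subsetUr //; congr forest_count.
have r_notin_S : r \notin S by apply/negP => /(subsetP sS); rewrite !inE eqxx.
by rewrite -[X in X.-1 - _]card_ord -(cardsC (r |: S)) cardsU1 r_notin_S add1n addSn addKn.
Qed.
End ParentTrees.

Definition root_profile N k l (E : {set {set 'I_N}}) (r : 'I_N) :=
  is_tree E && (#|small_children E r| == k) && (#|large_children E r| == l).

Lemma num_rooted_trees_by_root N k l :
  num_rooted_trees N k l = \sum_(r : 'I_N) #|[set E | root_profile k l E r]|.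
Proof.
rewrite (eq_bigr _ (fun r _ => esym (sum1dep_card _))) (exchange_big_dep xpredT) //=.
by rewrite pair_big_dep sum1dep_card.
Qed.

Lemma card_root_profile n k l (r : 'I_n.+1) :
  #|[set E | root_profile k l E r]| =
  'C(r, k) * 'C(n - r, l) * forest_count (n - (k + l)) (k + l).
Proof.
set below := [set c : 'I_n.+1 | c < r]; set above := [set c : 'I_n.+1 | r < c].
have below_above : [disjoint below & above].
  by rewrite disjoint_subset; apply/subsetP => c; rewrite !inE -leqNgt => /ltnW.
have split_r : below :|: above = ~: [set r].
  by apply/setP => c; rewrite !inE -val_eqE neq_ltn orbC.
have card_below : #|below| = r := card_ord_lt (ltnW (ltn_ord r)).
have card_above : #|above| = n - r.
  have := cardsUI below above; rewrite split_r cardsC1 card_ord card_below.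
  by rewrite (disjoint_setI0 below_above) cards0 /=; lia.
pose split_kl S := (#|S :&: below| == k) && (#|S :&: above| == l).
have profileE f : f \in parent_maps r ->
    root_profile k l (parent_tree r f) r = split_kl (first_layer [set r] f).
  move=> fP; rewrite /root_profile parent_tree_is_tree //=.
  by rewrite /small_children /large_children !children_parent_tree.
have -> : [set E | root_profile k l E r] =
    parent_tree r @: [set f in parent_maps r | split_kl (first_layer [set r] f)].
  apply/setP => E; rewrite inE; apply/idP/imsetP => [pE | [f /setIdP [fP split_f] ->]].
    have /andP [/andP [tE _] _] := pE; have [f fP fE] := parent_tree_surj r tE.
    by exists f => //; apply/setIdP; rewrite -profileE // fE.
  by rewrite profileE.
rewrite card_in_imset => [|f g /setIdP [fP _] /setIdP [gP _]]; last exact: parent_tree_inj.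
rewrite card_forest_maps_by_layer.
rewrite (eq_bigr (fun=> forest_count (n - (k + l)) (k + l))) => [|S /andP [sS split_S]].
  by rewrite sum_nat_cond_const -split_r card_split_subsets // card_below card_above.
rewrite card_parent_maps_first_layer //; suff -> : #|S| = k + l by [].
by rewrite (card_split below_above) ?split_r //; case/andP: split_S => /eqP -> /eqP ->.
Qed.

Lemma num_rooted_treesE n k l :
  num_rooted_trees n.+1 k l = 'C(n.+1, (k + l).+1) * forest_count (n - (k + l)) (k + l).
Proof.
rewrite num_rooted_trees_by_root (eq_bigr _ (fun r _ => card_root_profile k l r)).
by rewrite -big_distrl Vandermonde_upper.
Qed.

Unset Implicit Arguments.
Local Open Scope ring_scope.

Theorem mainTheorem1 (n k l : nat) :
  (1 <= n)%N -> (k + l <= n)%N ->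
  (num_rooted_trees n.+1 k l)%:R =
    ('C(n.+1, (k + l).+1))%:R * (k + l)%:R
      * (n%:R : rat) ^ ((n%:Z - (k + l)%:Z - 1)%R).
Proof.
move=> n_gt0 le_kl_n; rewrite num_rooted_treesE natrM -mulrA; congr (_ * _).
have [le_n_kl | lt_kl_n] := leqP n (k + l).
  have kl_n : (k + l = n)%N by apply/eqP; rewrite eqn_leq le_n_kl le_kl_n.
  by rewrite /forest_count kl_n subnn subrr sub0r exprN1 mulfV // pnatr_eq0 -lt0n.
rewrite /forest_count subn_eq0 leqNgt lt_kl_n /=.
have -> : (n - (k + l) + (k + l) = n)%N by rewrite subnK.
have -> : n%:Z - (k + l)%:Z - 1 = (n - (k + l)).-1 by lia.
by rewrite natrM natrX -exprnP.
Qed.
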